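(* Let $q=2^t$. Let $r+I\in\ker\pi_{P_1}\cap C_k(P,L)$, let $r^*\in R_P^*$ be its representative, and write $r^*=(1+x_3^{q-1})h$ with $h\in R_P^*$ not involving $x_3$. Then for every non-constant monomial $m$ of $h$, every digit of $m$ (in its 2-adic $t$-tuple) has degree exactly $1$.
   Context: Let $k=\mathbb{F}_q$, $q=2^t$, $V=k^4$ with coordinates $x_0,\dots,x_3$ relative to a symplectic basis $e_0,\dots,e_3$ of a nonsingular alternating form with $(e_0,e_3)=(e_1,e_2)=1$; $P$ the points (1-dim subspaces) and $L$ the totally isotropic 2-dim subspaces (lines). $R=k[x_0,\dots,x_3]$, $I=(x_i^q-x_i)_{i}$, $R^*$ the polynomials with each variable of degree $\le q-1$. $R_P^*$ is the $k$-span of monomials $x_0^{m_0}\cdots x_3^{m_3}$ with $0\le m_i\le q-1$ and $\sum m_i$ divisible by $q-1$; $R_P=\{f+I:f\in R_P^*\}$, identified with functions $P\to k$ by evaluation at nonzero vectors. For a line $\ell$, $\delta_\ell^*\in R_P^*$ is the polynomial representing the characteristic function of $\ell$ (value $1$ at $v\neq0$ iff $\langle v\rangle\in\ell$, else $0$), and $C_k(P,L)$ is the $k$-span of $\{\delta_\ell^*+I:\ell\in L\}$. $P_1$ is the set of points with $x_3$-coordinate nonzero and $\pi_{P_1}$ is restriction of functions to $P_1$. Any monomial $m=x_0^{m_0}x_1^{m_1}x_2^{m_2}x_3^{m_3}$ with $0\le m_i\le q-1$ has 2-adic $t$-tuple $[f_0,\dots,f_{t-1}]$, where, writing $m_i=\sum_{j=0}^{t-1}n_{i,j}2^j$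 with $n_{i,j}\in\{0,1\}$, the $j$-th digit is $f_j=x_0^{n_{0,j}}x_1^{n_{1,j}}x_2^{n_{2,j}}x_3^{n_{3,j}}$; thus $m=f_0f_1^2f_2^{4}\cdots f_{t-1}^{2^{t-1}}$. *)

From HB Require Import structures.
From mathcomp Require Import all_boot all_order all_algebra all_field.
Set Implicit Arguments. Unset Strict Implicit. Unset Printing Implicit Defensive.
Import GRing.Theory.
Local Open Scope ring_scope.

Definition i0 : 'I_4 := @Ordinal 4 0 isT.
Definition i1 : 'I_4 := @Ordinal 4 1 isT.
Definition i2 : 'I_4 := @Ordinal 4 2 isT.
Definition i3 : 'I_4 := @Ordinal 4 3 isT.

(* Exponent vectors of monomials of R^* : each exponent in {0,..,q-1}, q = #|F|. *)
Notation mon F := {ffun 'I_4 -> 'I_#|F|}.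
(* Elements of R^* : reduced polynomials, given by their coefficient functions. *)
Notation rpoly F := {ffun mon F -> F}.

Definition peval (F : finFieldType) (p : rpoly F) (v : 'rV[F]_4) : F :=
  \sum_(m : mon F) p m * \prod_(i < 4) (v 0 i) ^+ (m i).

Definition inRP (F : finFieldType) (p : rpoly F) : Prop :=
  forall m : mon F, p m != 0 -> (#|F|.-1 %| \sum_(i < 4) (m i : nat))%N.

Definition no_var (F : finFieldType) (i : 'I_4) (p : rpoly F) : Prop :=
  forall m : mon F, p m != 0 -> (m i : nat) = 0%N.

Definition subexp (F : finFieldType) (m : mon F) (i : 'I_4) (e : nat) : mon F :=
  [ffun j => if j == i then insubd (m j) ((m j : nat) - e)%N else m j].

(* Coefficients of x_i^e * h (exact whenever no exponent exceeds q-1, e.g. when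
   h does not involve x_i and e <= q-1). *)
Definition mulXpow (F : finFieldType) (i : 'I_4) (e : nat) (h : rpoly F) : rpoly F :=
  [ffun m : mon F => if (e <= m i)%N then h (subexp m i e) else 0].

Definition mul_1_plus_x3 (F : finFieldType) (h : rpoly F) : rpoly F :=
  [ffun m : mon F => h m + mulXpow i3 #|F|.-1 h m].

Definition symp (F : finFieldType) (x y : 'rV[F]_4) : F :=
  x 0 i0 * y 0 i3 - x 0 i3 * y 0 i0 + x 0 i1 * y 0 i2 - x 0 i2 * y 0 i1.

(* A 2x4 matrix whose row space is a line of L: rank 2 and totally isotropic.
   The line is the row space of A; v lies in it iff (v <= A)%MS. *)
Definition is_line (F : finFieldType) (A : 'M[F]_(2, 4)) : bool :=
  (\rank A == 2%N) && [forall i, [forall j, symp (row i A) (row j A) == 0]].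

(* 2-adic digits: n_{i,j} is the j-th binary digit of the exponent m_i; the
   j-th digit f_j = prod_i x_i^{n_{i,j}} has degree sum_i n_{i,j}. *)
Definition digit_deg (F : finFieldType) (m : mon F) (j : nat) : nat :=
  \sum_(i < 4) (((m i : nat) %/ 2 ^ j) %% 2)%N.

From HB Require Import structures.
From mathcomp Require Import all_boot all_order all_algebra all_field.
From mathcomp Require Import fingroup cyclic zify.
Set Implicit Arguments. Unset Strict Implicit. Unset Printing Implicit Defensive.
Import GRing.Theory.

(* Because h
   does not involve x_3, the coefficient of m x_3^N in r = (1 + x_3^N) h equals
   h(m); on the other hand r is a combination of the indicator polynomials of
   lines. So it suffices to show: if some digit of m does not have degree 1,
   the coefficient of m x_3^N in the indicator polynomial of any plane
   <a, b> of V vanishes.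

   - Arithmetic: binary digits, a carry lemma (three digit sequences that each
     represent 2^t - 1 and have 3 digits in every position have all digits
     equal to 1), and the bookkeeping of chosen digits of an exponent vector.
   - Power sums over F, and the dual basis dualpow to the monomials, which
     recovers coefficients of reduced polynomials from their values.
   - For the indicator of the row space of A the coefficient becomes a sum over
     x in F^2 of products of powers of linear forms; in characteristic 2 this
     expands (binary digits + Frobenius) into products of two power sums
     sum_y y^alpha * sum_y y^beta, nonzero only if alpha, beta are positive
     multiples of N. A degree count then forces alpha = beta = deg m = N and
     the carry lemma forces every digit of m to have degree 1. *)

Definition bit (x j : nat) : bool := odd (x %/ 2 ^ j).

Lemma bit_first (x : nat) : bit x 0 = odd x.
Proof. by rewrite /bit expn0 divn1. Qed.

Lemma bitS (x j : nat) : bit x j.+1 = bit x./2 j.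
Proof. by rewrite /bit expnS divnMA divn2. Qed.

Lemma bit0n (j : nat) : bit 0 j = false.
Proof. by rewrite /bit div0n. Qed.

Lemma half_lt_pow2 (t x : nat) : x < 2 ^ t.+1 -> x./2 < 2 ^ t.
Proof. by move=> x_lt; rewrite -ltn_double -!muln2 -expnSr; move: (odd_double_half x); lia. Qed.

Lemma binary_expansion (t x : nat) :
  x < 2 ^ t -> \sum_(j < t) (if bit x j then 2 ^ j else 0) = x.
Proof.
elim: t x => [|t IH] x; first by rewrite expn0 ltnS leqn0 big_ord0 => /eqP.
move=> x_lt; rewrite big_ord_recl /= bit_first expn0.
have -> : \sum_(j < t) (if bit x (bump 0 j) then 2 ^ bump 0 j else 0) =
          2 * \sum_(j < t) (if bit x./2 j then 2 ^ j else 0).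
  by rewrite big_distrr; apply: eq_bigr => j _; rewrite /bump /= add1n bitS expnS; case: bit.
rewrite IH ?half_lt_pow2 // -[RHS]odd_double_half -mul2n.
by case: odd.
Qed.

Lemma bit_complement (t x j : nat) :
  x < 2 ^ t -> j < t -> bit (2 ^ t - 1 - x) j = ~~ bit x j.
Proof.
elim: t x j => [|t IH] x j x_lt j_lt //.
have split_x : 2 ^ t.+1 - 1 - x = ~~ odd x + (2 ^ t - 1 - x./2).*2.
  have := half_lt_pow2 x_lt; have := odd_double_half x.
  rewrite expnS -!muln2; case: (odd x) => /=; lia.
case: j j_lt => [|j] j_lt.
  by rewrite !bit_first split_x oddD odd_double oddb addbF.
by rewrite !bitS split_x half_bit_double IH ?half_lt_pow2.
Qed.

Lemma sum_digits_shift (t : nat) (A : 'I_t.+1 -> nat) :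
  \sum_(j < t.+1) A j * 2 ^ j = A ord0 + 2 * \sum_(j < t) A (lift ord0 j) * 2 ^ j.
Proof.
rewrite big_ord_recl expn0 muln1 big_distrr /=; congr (_ + _).
by apply: eq_bigr => j _; rewrite /bump /= add1n expnS mulnCA.
Qed.

(* Carry argument: if three digit sequences (digits of any size) all represent
   2^t - 1 and their digits add up to 3 in every position, then every digit is 1.
   The lowest digits must all be odd, hence all equal to 1; then divide by 2. *)
Lemma digits_all_one (t : nat) (A C D : 'I_t -> nat) :
  (forall j, A j + C j + D j = 3) ->
  \sum_(j < t) A j * 2 ^ j = 2 ^ t - 1 ->
  \sum_(j < t) C j * 2 ^ j = 2 ^ t - 1 ->
  \sum_(j < t) D j * 2 ^ j = 2 ^ t - 1 ->
  forall j, D j = 1.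
Proof.
elim: t A C D => [|t IH] A C D sum3 sumA sumC sumD j; first by case: j.
rewrite !sum_digits_shift in sumA sumC sumD.
have low_odd X Y : X + 2 * Y = 2 ^ t.+1 - 1 -> odd X.
  move=> eXY; have := congr1 odd eXY.
  by rewrite oddD oddM /= addbF oddB ?expn_gt0 // oddX.
have [A01 C01 D01] : [/\ A ord0 = 1, C ord0 = 1 & D ord0 = 1].
  move: (sum3 ord0) (low_odd _ _ sumA) (low_odd _ _ sumC) (low_odd _ _ sumD).
  case: (A ord0) => [|[|[|[|a]]]] //; case: (C ord0) => [|[|[|[|c]]]] //;
  by case: (D ord0) => [|[|[|[|d]]]] //; rewrite ?addnS ?addSn.
have halve Y : 1 + 2 * Y = 2 ^ t.+1 - 1 -> Y = 2 ^ t - 1 by rewrite expnS; lia.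
rewrite A01 in sumA; rewrite C01 in sumC; rewrite D01 in sumD.
have := IH (A \o lift ord0) (C \o lift ord0) (D \o lift ord0) (fun j => sum3 _)
  (halve _ sumA) (halve _ sumC) (halve _ sumD).
by move=> D_one; case: (unliftP ord0 j) => [j' ->|->] //; apply: D_one.
Qed.

Section DigitWeights.

Variables n t : nat.

(* A set g of positions (i, j) (variable i, binary digit j) has weight
   sum_{(i,j) in g} 2^j: the exponent obtained by keeping those digits. *)
Definition weight (g : 'I_n * 'I_t -> bool) : nat :=
  \sum_(p : 'I_n * 'I_t) (if g p then 2 ^ p.2 else 0).

Definition digits_of (e : 'I_n -> nat) (p : 'I_n * 'I_t) : bool := bit (e p.1) p.2.

Definition sub_digits (e : 'I_n -> nat) (f : {ffun 'I_n * 'I_t -> bool}) : bool :=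
  [forall p, f p ==> digits_of e p].
Definition co_digits (e : 'I_n -> nat) (f : {ffun 'I_n * 'I_t -> bool})
  (p : 'I_n * 'I_t) : bool := digits_of e p && ~~ f p.

Lemma weight_pairs (g : 'I_n * 'I_t -> bool) :
  weight g = \sum_(i < n) \sum_(j < t) (if g (i, j) then 2 ^ j else 0).
Proof. by rewrite pair_bigA; apply: eq_bigr => -[i j]. Qed.

Lemma weight_by_position (g : 'I_n * 'I_t -> bool) :
  weight g = \sum_(j < t) (\sum_(i < n) g (i, j)) * 2 ^ j.
Proof.
rewrite weight_pairs exchange_big; apply: eq_bigr => j _; rewrite big_distrl /=.
by apply: eq_bigr => i _; case: (g (i, j)); rewrite ?mul1n ?mul0n.
Qed.

Lemma weight_digits (e : 'I_n -> nat) :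
  (forall i, e i < 2 ^ t) -> weight (digits_of e) = \sum_(i < n) e i.
Proof.
move=> e_lt; rewrite weight_pairs.
by apply: eq_bigr => i _; rewrite /digits_of /= binary_expansion.
Qed.

Lemma weight_split (e : 'I_n -> nat) (f : {ffun 'I_n * 'I_t -> bool}) :
  sub_digits e f -> weight f + weight (co_digits e f) = weight (digits_of e).
Proof.
move=> /forallP f_sub; rewrite /weight -big_split /=; apply: eq_bigr => p _.
move: (f_sub p); rewrite /co_digits.
by case: (f p); case: (digits_of e p) => //= _; rewrite ?addn0.
Qed.

End DigitWeights.

Lemma tight_budget (n N a b M : nat) (e c : 'I_n -> nat) :
  (forall i, e i <= c i) -> a + b = \sum_(i < n) e i ->
  \sum_(i < n) c i + M = 3 * N -> N <= a -> N <= b -> N <= M ->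
  [/\ a = N, b = N, M = N & forall i, e i = c i].
Proof.
move=> e_le_c sum_ab sum_c aN bN MN.
have le_sum : \sum_(i < n) e i <= \sum_(i < n) c i by apply: leq_sum.
have sum_eq : \sum_(i < n) e i = \sum_(i < n) c i by lia.
split; try lia; move=> i; apply/eqP; rewrite eqn_leq e_le_c /=.
have /eqP : \sum_(i < n) (c i - e i) = 0 by rewrite sumnB // sum_eq subnn.
by rewrite sum_nat_eq0 => /forallP /(_ i); rewrite subn_eq0.
Qed.

(* The exponent vector of m * x_3^N, for m not involving x_3. *)
Definition top3_exp (N : nat) (m : 'I_4 -> nat) (i : 'I_4) : nat :=
  if i == i3 then N else m i.

Section DigitsOfTheTop.

Variables (t : nat) (m : 'I_4 -> nat).
Local Notation N := (2 ^ t - 1).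
Hypotheses (m_lt : forall i, m i < 2 ^ t) (m3 : m i3 = 0).

Lemma sum_top3_compl :
  \sum_(i < 4) (N - top3_exp N m i) + \sum_(i < 4) m i = 3 * N.
Proof.
have mN i : m i <= N by have := m_lt i; lia.
rewrite -big_split (bigD1 i3) //= /top3_exp eqxx m3 subnn add0n.
rewrite (eq_bigr (fun _ => N)) => [|i /negbTE ->]; last by rewrite subnK ?mN.
by rewrite sum_nat_const cardC1 card_ord mulnC.
Qed.

Lemma digit_count_three (e : 'I_4 -> nat) (f : {ffun 'I_4 * 'I_t -> bool}) :
  (forall i, e i = N - top3_exp N m i) -> sub_digits e f ->
  forall j : 'I_t,
    \sum_(i < 4) f (i, j) + \sum_(i < 4) co_digits e f (i, j) + \sum_(i < 4) bit (m i) j = 3.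
Proof.
move=> e_compl /forallP f_sub j; rewrite -!big_split /=.
transitivity (\sum_(i < 4) (i != i3 : nat)); last by rewrite !big_ord_recr big_ord0.
apply: eq_bigr => i _; move: (f_sub (i, j)); rewrite /co_digits /digits_of /= e_compl.
rewrite /top3_exp; case: eqP => [->|_].
  by rewrite subnn m3 bit0n; case: (f (i3, j)).
by rewrite bit_complement ?ltn_ord //; case: (f (i, j)); case: bit.
Qed.

(* The digit condition forced by a nonvanishing product of two power sums. *)
Lemma digits_of_top3 (e : 'I_4 -> nat) (f : {ffun 'I_4 * 'I_t -> bool}) :
  0 < \sum_(i < 4) m i -> N %| \sum_(i < 4) m i ->
  (forall i, e i <= N - top3_exp N m i) -> sub_digits e f ->
  0 < weight f -> N %| weight f ->
  0 < weight (co_digits e f) -> N %| weight (co_digits e f) ->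
  forall j : 'I_t, \sum_(i < 4) bit (m i) j = 1.
Proof.
move=> M_gt0 M_dvd e_le f_sub a_gt0 a_dvd b_gt0 b_dvd.
have e_lt i : e i < 2 ^ t by have := e_le i; rewrite /top3_exp; case: ifP; lia.
have sum_ab : weight f + weight (co_digits e f) = \sum_(i < 4) e i.
  by rewrite weight_split // weight_digits.
have [aN bN MN e_compl] := tight_budget e_le sum_ab sum_top3_compl
  (dvdn_leq a_gt0 a_dvd) (dvdn_leq b_gt0 b_dvd) (dvdn_leq M_gt0 M_dvd).
apply: digits_all_one (digit_count_three e_compl f_sub) _ _ _.
- by rewrite -aN weight_by_position.
- by rewrite -bN weight_by_position.
- by rewrite -MN -(weight_digits m_lt) weight_by_position.
Qed.

End DigitsOfTheTop.

Local Open Scope ring_scope.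

Section PowerSums.

Variable F : finFieldType.
Local Notation q := #|F|.

(* The additive order of 1 divides #|F|, so q = 0 in F. *)
Lemma natr_card : q%:R = 0 :> F.
Proof. by rewrite -cardsT -FinRing.zmodXgE expg_cardG ?inE. Qed.

Lemma card_pred_gt0 : (0 < q.-1)%N.
Proof. by rewrite -subn1 subn_gt0 finNzRing_gt1. Qed.

Lemma natr_card_pred : q.-1%:R = -1 :> F.
Proof.
apply/eqP; rewrite -addr_eq0 natr1 prednK ?natr_card //.
exact: ltnW (finNzRing_gt1 F).
Qed.

Lemma expf_card_pred (y : F) : y != 0 -> y ^+ q.-1 = 1.
Proof.
move=> y0; apply: (mulIf y0).
by rewrite mul1r -exprSr prednK ?expf_card // ltnW ?finNzRing_gt1.
Qed.

(* For 0 < r < q - 1 the map y |-> y ^+ r is not constantly 1 on F^*: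
   'X^r - 1 has at most r < q - 1 roots. *)
Lemma exists_pow_neq1 (r : nat) :
  (0 < r)%N -> (r < q.-1)%N -> exists2 a : F, a != 0 & a ^+ r != 1.
Proof.
move=> r_gt0 r_lt; apply/exists_inP; apply: contraLR r_lt.
rewrite negb_exists_in => /forall_inP all_roots; rewrite -leqNgt.
have nz : ('X^r - 1%:P : {poly F}) != 0 by rewrite -size_poly_eq0 size_XnsubC.
have roots : all (root ('X^r - 1%:P)) (enum (predC1 (0 : F))).
  apply/allP => x; rewrite mem_enum /root !hornerE => /all_roots.
  by rewrite negbK subr_eq0.
by have := max_poly_roots nz roots (enum_uniq _); rewrite size_XnsubC // -cardE cardC1.
Qed.

Lemma sum_pow (n : nat) :
  \sum_(y : F) y ^+ n = if (0 < n)%N && (q.-1 %| n)%N then -1 else 0.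
Proof.
case: n => [|n] /=.
  by under eq_bigr do rewrite expr0; rewrite sumr_const natr_card.
rewrite (bigD1 0) //= expr0n add0r.
case: ifP => [/dvdnP[k ->] | ndvd].
  rewrite (eq_bigr (fun _ => 1)) => [|y y0]; last by rewrite mulnC exprM expf_card_pred ?expr1n.
  by rewrite sumr_const cardC1 natr_card_pred.
set r := (n.+1 %% q.-1)%N.
have r_gt0 : (0 < r)%N by rewrite lt0n; apply: contraFN ndvd.
have [a a0 ar] := exists_pow_neq1 r_gt0 (ltn_pmod _ card_pred_gt0).
have ea : a ^+ n.+1 = a ^+ r.
  by rewrite {1}(divn_eq n.+1 q.-1) exprD mulnC exprM expf_card_pred // expr1n mul1r.
set S := \sum_(i | _) _.
have S_inv : S = a ^+ n.+1 * S.
  rewrite /S mulr_sumr (reindex_inj (mulfI a0)) /=.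
  apply: eq_big => [y|y _]; first by rewrite mulf_eq0 (negbTE a0).
  by rewrite exprMn.
apply/eqP; move/eqP: S_inv; rewrite -subr_eq0 -{1}(mul1r S) -mulrBl mulf_eq0.
by rewrite subr_eq0 ea eq_sym (negbTE ar).
Qed.

(* The functions dualpow k form the basis dual to the monomials y^a, a < q,
   with respect to summation over F. *)
Definition dualpow (k : nat) (y : F) : F := (k == 0%N)%:R - y ^+ (q.-1 - k).

Lemma sum_pow_dualpow (a k : nat) :
  (a < q)%N -> (k < q)%N -> \sum_(y : F) y ^+ a * dualpow k y = (a == k)%:R.
Proof.
move=> a_lt k_lt; have N0 := card_pred_gt0.
have aN : (a <= q.-1)%N by rewrite -ltnS prednK // ltnW ?finNzRing_gt1.
under eq_bigr do rewrite mulrBr -exprD.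
rewrite sumrB -mulr_suml !sum_pow.
case: k k_lt => [|k] k_lt.
  rewrite subn0 mulr1 addn_gt0 N0 orbT dvdn_addl //=.
  by case: a {a_lt aN} => [|a] /=; rewrite ?dvdn0 ?sub0r ?opprK ?subrr.
have kN : (k < q.-1)%N by rewrite -ltnS prednK // ltnW ?finNzRing_gt1.
have -> : ((0 < a + (q.-1 - k.+1)) && (q.-1 %| a + (q.-1 - k.+1)))%N = (a == k.+1).
  apply/andP/eqP => [[s_gt0 /dvdnP[c sc]] | ->]; last by rewrite subnKC.
  have c1 : c = 1%N by nia.
  by move: sc; rewrite c1 mul1n; lia.
by rewrite mulr0 sub0r; case: eqP; rewrite ?opprK ?oppr0.
Qed.

Lemma prod_dualpow (n : nat) (k : 'I_n -> nat) (y : 'I_n -> F) :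
  \prod_(i < n) dualpow (k i) (y i) =
  \sum_(s : {ffun 'I_n -> bool})
    (\prod_(i < n) (if s i then (k i == 0%N)%:R else -1)) *
    \prod_(i < n) y i ^+ (if s i then 0 else q.-1 - k i)%N.
Proof.
rewrite (eq_bigr (fun i => \sum_(b : bool)
  (if b then (k i == 0%N)%:R else - y i ^+ (q.-1 - k i)))) => [|i _]; last first.
  by rewrite big_bool.
rewrite bigA_distr_bigA; apply: eq_bigr => s _; rewrite -big_split /=.
by apply: eq_bigr => i _; case: (s i); rewrite ?expr0 ?mulr1 ?mulN1r.
Qed.

End PowerSums.

Section CoefficientsFromValues.

Variable F : finFieldType.

Lemma sum_rV_prod (n : nat) (G : 'I_n -> F -> F) :
  \sum_(v : 'rV[F]_n) \prod_(i < n) G i (v 0 i) = \prod_(i < n) \sum_(y : F) G i y.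
Proof.
rewrite bigA_distr_bigA /= (reindex (fun f : {ffun 'I_n -> F} => \row_i f i)) /=.
  by apply: eq_bigr => f _; apply: eq_bigr => i _; rewrite mxE.
exists (fun v : 'rV[F]_n => [ffun i => v 0 i]) => [f _|v _].
  by apply/ffunP => i; rewrite ffunE mxE.
by apply/rowP => i; rewrite mxE ffunE.
Qed.

Lemma sum_rV2_monomial (a b : nat) :
  \sum_(x : 'rV[F]_2) x 0 0 ^+ a * x 0 1 ^+ b =
  (\sum_(y : F) y ^+ a) * (\sum_(y : F) y ^+ b).
Proof.
pose G (k : 'I_2) (y : F) := y ^+ (if (k : nat) == 0%N then a else b).
transitivity (\sum_(x : 'rV[F]_2) \prod_(k < 2) G k (x 0 k)).
  apply: eq_bigr => x _; rewrite !big_ord_recl big_ord0 mulr1 /G /=.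
  by congr (x 0 _ ^+ _ * x 0 _ ^+ _); apply: val_inj.
by rewrite sum_rV_prod !big_ord_recl big_ord0 mulr1.
Qed.

Lemma coef_from_values (p : rpoly F) (m : mon F) :
  p m = \sum_(v : 'rV[F]_4) peval p v * \prod_(i < 4) dualpow (m i) (v 0 i).
Proof.
rewrite /peval; under eq_bigr do rewrite mulr_suml.
rewrite exchange_big /=.
under eq_bigr => m' _.
  under eq_bigr do rewrite -mulrA -big_split /=.
  rewrite -mulr_sumr (sum_rV_prod (fun i y => y ^+ m' i * dualpow (m i) y)).
  under eq_bigr do rewrite sum_pow_dualpow //.
  over.
rewrite (bigD1 m) //= big1 => [|i _]; last by rewrite eqxx.
rewrite mulr1 big1 ?addr0 // => m' m'_neq.
have [i m'i] : exists i, m' i != m i.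
  by apply/existsP; apply: contraR m'_neq => /existsPn eq_m; apply/eqP/ffunP => i; apply/eqP/negPn.
by rewrite (bigD1 i) //= (negbTE (_ : (m' i : nat) != m i)) ?mul0r ?mulr0.
Qed.

Lemma sum_rowspace (k n : nat) (A : 'M[F]_(k, n)) (G : 'rV[F]_n -> F) :
  row_free A ->
  \sum_(v : 'rV[F]_n) (if (v <= A)%MS then 1 else 0) * G v =
  \sum_(x : 'rV[F]_k) G (x *m A).
Proof.
move=> A_free.
rewrite (eq_bigr (fun v => if (v <= A)%MS then G v else 0)) => [|v _]; last first.
  by case: ifP; rewrite ?mul1r ?mul0r.
have inj : {in [set: 'rV[F]_k] &, injective (fun x : 'rV[F]_k => x *m A)}.
  by move=> x y _ _; apply: row_free_inj.
rewrite -big_mkcond /= -(eq_bigl _ _ (fun x => in_setT x)) -(big_imset _ inj) /=.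
apply: eq_bigl => v; apply/idP/imsetP => [/submxP[x ->]|[x _ ->]].
  by exists x; rewrite ?inE.
exact: submxMl.
Qed.

Lemma coef_rowspace_indicator (k : nat) (A : 'M[F]_(k, 4)) (p : rpoly F) (m : mon F) :
  row_free A -> (forall v : 'rV[F]_4, peval p v = (if (v <= A)%MS then 1 else 0)) ->
  p m = \sum_(x : 'rV[F]_k) \prod_(i < 4) dualpow (m i) ((x *m A) 0 i).
Proof.
move=> A_free p_ind; rewrite coef_from_values.
under eq_bigr do rewrite p_ind.
exact: (sum_rowspace (fun v => \prod_(i < 4) dualpow (m i) (v 0 i))).
Qed.

Lemma row2_mulmx (x : 'rV[F]_2) (A : 'M[F]_(2, 4)) (i : 'I_4) :
  (x *m A) 0 i = x 0 0 * A 0 i + x 0 1 * A 1 i.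
Proof.
rewrite mxE !big_ord_recl big_ord0 addr0 /=.
by congr (x 0 _ * A _ i + x 0 _ * A _ i); apply: val_inj.
Qed.

End CoefficientsFromValues.

Section PlaneSums.

Variables (F : finFieldType) (t n : nat).
Hypothesis hq : #|F| = (2 ^ t)%N.

Lemma pchar2 : (2 \in [pchar F])%N.
Proof. exact: card_finPcharP hq _. Qed.

Lemma exprD_pow2 (j : nat) (x y : F) : (x + y) ^+ (2 ^ j) = x ^+ (2 ^ j) + y ^+ (2 ^ j).
Proof. by apply: exprDn_pchar; rewrite (eq_pnat _ (pcharf_eq pchar2)) pnatX pnat_id. Qed.

Lemma expr_digits (y : F) (x : nat) :
  (x < 2 ^ t)%N -> y ^+ x = \prod_(j < t) (if bit x j then y ^+ (2 ^ j) else 1).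
Proof.
move=> x_lt; rewrite -{1}(binary_expansion x_lt) -prodrXr.
by apply: eq_bigr => j _; case: bit.
Qed.

(* The factor contributed by digit p = (i, j) of e to the expansion of
   prod_i (s u_i + r w_i)^(e_i): the s-part if c, the r-part otherwise. *)
Definition digit_term (e : 'I_n -> nat) (u w : 'I_n -> F) (s r : F)
  (p : 'I_n * 'I_t) (c : bool) : F :=
  if digits_of e p then (if c then s * u p.1 else r * w p.1) ^+ (2 ^ p.2)
  else (c == false)%:R.

(* Writing each e_i in binary and applying Frobenius digit by digit. *)
Lemma expand_linear_forms (e : 'I_n -> nat) (u w : 'I_n -> F) (s r : F) :
  (forall i, e i < 2 ^ t)%N ->
  \prod_(i < n) (s * u i + r * w i) ^+ e i =
  \sum_(f : {ffun 'I_n * 'I_t -> bool})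
    \prod_(p : 'I_n * 'I_t) digit_term e u w s r p (f p).
Proof.
move=> e_lt; rewrite -bigA_distr_bigA /=.
transitivity (\prod_(i < n) \prod_(j < t) \sum_(c : bool) digit_term e u w s r (i, j) c).
  apply: eq_bigr => i _; rewrite (expr_digits _ (e_lt i)); apply: eq_bigr => j _.
  rewrite big_bool /digit_term /digits_of /=.
  by case: bit; rewrite ?addr0 ?add0r // exprD_pow2.
by rewrite pair_bigA; apply: eq_bigr => -[i j].
Qed.

Definition digit_coef (e : 'I_n -> nat) (u w : 'I_n -> F)
  (f : {ffun 'I_n * 'I_t -> bool}) : F :=
  \prod_(p : 'I_n * 'I_t)
    (if digits_of e p then (if f p then u p.1 else w p.1) ^+ (2 ^ p.2) else 1).

Lemma plane_sum_expansion (e : 'I_n -> nat) (u w : 'I_n -> F) :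
  (forall i, e i < 2 ^ t)%N ->
  \sum_(x : 'rV[F]_2) \prod_(i < n) (x 0 0 * u i + x 0 1 * w i) ^+ e i =
  \sum_(f | sub_digits e f)
    (\sum_(y : F) y ^+ weight f) * (\sum_(y : F) y ^+ weight (co_digits e f)) *
    digit_coef e u w f.
Proof.
move=> e_lt; under eq_bigr do rewrite (expand_linear_forms _ _ _ _ e_lt).
rewrite exchange_big [RHS]big_mkcond /=; apply: eq_bigr => f _.
case: ifPn => [f_sub | /forallPn[p]]; last first.
  rewrite negb_imply => /andP[fp not_digit]; apply: big1 => x _.
  by rewrite (bigD1 p) //= /digit_term (negbTE not_digit) fp mul0r.
rewrite -sum_rV2_monomial mulr_suml; apply: eq_bigr => x _.
rewrite /weight -!prodrXr /digit_coef -!big_split /=; apply: eq_bigr => p _.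
move/forallP: f_sub => /(_ p); rewrite /digit_term /co_digits.
by case: (f p); case: digits_of => //= _; rewrite ?mulr1 ?mul1r ?exprMn.
Qed.

End PlaneSums.

Lemma top3_coef_vanishes (F : finFieldType) (t : nat) (hq : #|F| = (2 ^ t)%N)
  (A : 'M[F]_(2, 4)) (m : 'I_4 -> nat) :
  (forall i, m i < #|F|)%N -> m i3 = 0%N ->
  (0 < \sum_(i < 4) m i)%N -> (#|F|.-1 %| \sum_(i < 4) m i)%N ->
  (exists j : 'I_t, (\sum_(i < 4) bit (m i) j != 1)%N) ->
  \sum_(x : 'rV[F]_2) \prod_(i < 4) dualpow (top3_exp #|F|.-1 m i) ((x *m A) 0 i) = 0.
Proof.
move=> m_lt m3 M_gt0 M_dvd [j bad_j].
have q1 : #|F|.-1 = (2 ^ t - 1)%N by rewrite hq subn1.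
rewrite hq in m_lt; rewrite q1 in M_dvd.
under eq_bigr do rewrite prod_dualpow.
rewrite exchange_big /= q1; apply: big1 => s _.
pose e i := if s i then 0%N else (2 ^ t - 1 - top3_exp (2 ^ t - 1) m i)%N.
have e_le i : (e i <= 2 ^ t - 1 - top3_exp (2 ^ t - 1) m i)%N by rewrite /e; case: (s i).
have e_lt i : (e i < 2 ^ t)%N by have := e_le i; have := expn_gt0 2 t; lia.
set C := \prod_(i < 4) (if s i then _ else -1).
rewrite (eq_bigr (fun x : 'rV[F]_2 => C * \prod_(i < 4) (x 0 0 * A 0 i + x 0 1 * A 1 i) ^+ e i)).
  2: by move=> x _; congr (_ * _); apply: eq_bigr => i _; rewrite row2_mulmx.
rewrite -mulr_sumr (plane_sum_expansion hq _ _ e_lt) big1 ?mulr0 // => f f_sub.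
rewrite !sum_pow q1; case: ifP => [/andP[a_gt0 a_dvd]|_]; last by rewrite !mul0r.
case: ifP => [/andP[b_gt0 b_dvd]|_]; last by rewrite mulr0 mul0r.
have digits_one := digits_of_top3 m_lt m3 M_gt0 M_dvd e_le f_sub a_gt0 a_dvd b_gt0 b_dvd.
by rewrite digits_one in bad_j.
Qed.

Definition top3 (F : finFieldType) (m : mon F) : mon F :=
  [ffun i => if i == i3 then insubd (m i) #|F|.-1 else m i].

Lemma top3E (F : finFieldType) (m : mon F) (i : 'I_4) :
  (top3 m i : nat) = top3_exp #|F|.-1 (fun k => m k : nat) i.
Proof.
rewrite ffunE /top3_exp; case: eqP => // _.
by rewrite insubdK // -topredE /= ltn_predL (ltnW (finNzRing_gt1 F)).
Qed.

Lemma coef_top3 (F : finFieldType) (h : rpoly F) (m : mon F) :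
  no_var i3 h -> (m i3 : nat) = 0%N -> mul_1_plus_x3 h (top3 m) = h m.
Proof.
move=> h_no3 m3; rewrite ffunE /mulXpow ffunE top3E /top3_exp eqxx leqnn.
have -> : h (top3 m) = 0.
  apply/eqP; apply: contraTT (card_pred_gt0 F) => /h_no3.
  by rewrite top3E /top3_exp eqxx => ->.
rewrite add0r; congr (h _); apply/ffunP => i; rewrite !ffunE.
have q1_lt : (#|F|.-1 < #|F|)%N by rewrite ltn_predL (ltnW (finNzRing_gt1 F)).
case: eqP => [-> | _] //; apply: val_inj.
have top_val : (insubd (m i3) #|F|.-1 : nat) = #|F|.-1 by rewrite insubdK.
by rewrite insubdK top_val subnn ?m3 // -topredE /= (leq_ltn_trans _ q1_lt).
Qed.

Unset Implicit Arguments.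

Theorem lemma10
  (F : finFieldType) (t : nat) (hq : #|F| = (2 ^ t)%N)
  (delta : 'M[F]_(2, 4) -> rpoly F)
  (hdelta : forall A : 'M[F]_(2, 4), is_line A ->
     forall v : 'rV[F]_4, peval (delta A) v = (if (v <= A)%MS then 1 else 0))
  (r : rpoly F) (hrP : inRP r)
  (hrC : exists c : 'M[F]_(2, 4) -> F,
     forall m : mon F, r m = \sum_(A : 'M[F]_(2, 4) | is_line A) c A * delta A m)
  (hrker : forall v : 'rV[F]_4, v 0 i3 != 0 -> peval r v = 0)
  (h : rpoly F) (hhP : inRP h) (hh3 : no_var i3 h)
  (hrh : r = mul_1_plus_x3 h) :
  forall m : mon F, h m != 0 -> (exists i, (m i : nat) != 0%N) ->
    forall j : nat, (j < t)%N -> digit_deg m j = 1%N.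
Proof.
move=> m hm [i m_i] j jt.
have m3 : (m i3 : nat) = 0%N by apply: hh3.
have M_dvd := hhP m hm.
have M_gt0 : (0 < \sum_(k < 4) m k)%N by rewrite (bigD1 i) //= addn_gt0 lt0n m_i.
have -> : digit_deg m j = (\sum_(k < 4) bit (m k) j)%N.
  by apply: eq_bigr => k _; rewrite modn2.
apply/eqP; apply: contraTT hm => bad_j; apply/negPn/eqP.
rewrite -(coef_top3 hh3 m3) -hrh; case: hrC => c ->.
apply: big1 => A A_line; have [A_free _] := andP A_line.
rewrite (coef_rowspace_indicator _ A_free (hdelta A A_line)).
under eq_bigr do under eq_bigr do rewrite top3E.
rewrite (top3_coef_vanishes hq _ (fun k => ltn_ord (m k)) m3 M_gt0 M_dvd) ?mulr0 //.
by exists (Ordinal jt).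
Qed.
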